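(* Let $n=2d$ be even, let $G=D_{2n}=\langle z,y\mid z^{2n}=y^2=1,\ yzy=z^{-1}\rangle$ and $H=\langle z^2,y\rangle\cong D_n$ (an index 2 subgroup). Then for none of the cover types I, II, III-a, III-b does there exist an admissible homomorphism $f:T(m_1,\dots,m_r)\to G$.
   Context: For integers $m_1,\dots,m_r\ge 2$, $T(m_1,\dots,m_r):=\langle\gamma_1,\dots,\gamma_r\mid \gamma_1\cdots\gamma_r=1,\ \gamma_i^{m_i}=1\rangle$. Let $H\subset G$ have index 2 and let $f_H:=\pi_H\circ f$, where $\pi_H:G\to G/H\cong\mathbb Z/2$ is the quotient map. A homomorphism $f:T(m_1,\dots,m_r)\to G$ is admissible for a given cover type if $f$ is surjective, $f(\gamma_i)$ has order exactly $m_i$, and the branching data are as follows: Cover type I: $r=6$, $(m_i)=(2,2,2,2,2,2)$, and $f_H(\gamma_i)\neq 0$ for all $i$. Cover type II: $r=5$, $(m_i)=(2,2,2,2,c_5)$, $f_H(\gamma_i)\ne 0$ for $i\le 4$ and $f_H(\gamma_5)=0$. Cover type III-a: $r=4$, $(m_i)=(2,2,2,2d_4)$ with $d_4>1$, and $f_H(\gamma_i)\neq0$ for all $i$. Cover type III-b: $r=4$, $(m_i)=(2,2,c_3,c_4)$ with $c_3\le c_4$, $c_4>2$, $f_H(\gamma_1),f_H(\gamma_2)\ne 0$ and $f_H(\gamma_3)=f_H(\gamma_4)=0$. *)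

From mathcomp Require Import all_boot all_fingroup.
Set Implicit Arguments.
Unset Strict Implicit.
Unset Printing Implicit Defensive.

Local Open Scope group_scope.

(* A homomorphism f : T(m_0,...,m_{r-1}) -> G is, by the universal property of
   the presentation T = <gamma_i | gamma_0 ... gamma_{r-1} = 1, gamma_i^{m_i} = 1>,
   the same as a tuple g_i = f(gamma_i) of elements of G with ordered product 1
   and g_i^{m_i} = 1.  Indices are 0-based.
   [outH i] encodes the branching datum "f_H(gamma_i) <> 0", i.e. g_i \notin H
   (f_H = pi_H o f, pi_H : G -> G/H = Z/2). *)
Definition admissible (gT : finGroupType) (G H : {set gT}) (r : nat)
    (m : nat -> nat) (outH : nat -> bool) (g : 'I_r -> gT) : Prop :=
  [/\ (forall i : 'I_r, g i \in G),
      \prod_(i < r) g i = 1,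
      (forall i : 'I_r, g i ^+ m i = 1)
    & [/\ <<[set g i | i : 'I_r]>> = G,
           (forall i : 'I_r, #[g i] = m i)
         & (forall i : 'I_r, (g i \notin H) = outH i)]].

Definition typeI_m (i : nat) : nat := 2.
Definition typeI_out (i : nat) : bool := true.
Definition typeII_m (c5 : nat) (i : nat) : nat := nth 0%N [:: 2; 2; 2; 2; c5]%N i.
Definition typeII_out (i : nat) : bool := (i < 4)%N.
Definition typeIIIa_m (d4 : nat) (i : nat) : nat := nth 0%N [:: 2; 2; 2; 2 * d4]%N i.
Definition typeIIIa_out (i : nat) : bool := true.
Definition typeIIIb_m (c3 c4 : nat) (i : nat) : nat := nth 0%N [:: 2; 2; c3; c4]%N i.
Definition typeIIIb_out (i : nat) : bool := (i < 2)%N.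

From mathcomp Require Import all_boot all_fingroup cyclic zify.

(* Besides H = <z^2, y> and <z>, the dihedral group G = <z, y> of order 4n has
   a third index-2 subgroup K = <z^2, z y>.  As n is even, 4 divides the order
   2n of z, so z^(2i) <> 1 for odd i; hence every involution of G outside H
   is a reflection z^i y with i odd, which lies in K, and every element of H
   of order > 2 is a rotation z^(2k), also in K.  In each cover type all
   generators but one are of these two kinds, and the remaining one lies in K
   because the product of all generators is 1.  So the generators lie in K,
   which does not contain y: they cannot generate G. *)

Set Implicit Arguments.
Unset Strict Implicit.
Unset Printing Implicit Defensive.

Local Open Scope group_scope.

Lemma prod_eq1_mem (gT : finGroupType) (K : {group gT}) (I : finType)
    (g : I -> gT) (j : I) :
  \prod_i g i = 1 -> (forall i, i != j -> g i \in K) -> g j \in K.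
Proof.
move=> prod1 gK.
have memK s : j \notin s -> \prod_(i <- s) g i \in K.
  move=> js; rewrite big_seq; apply: group_prod => i i_s.
  by apply: gK; apply: contraNneq js => <-.
move: (index_enum_uniq I) prod1.
rewrite -[\prod_i _]/(\prod_(i <- index_enum I) g i).
case/splitPr: (mem_index_enum j) => s1 s2.
rewrite cat_uniq /= negb_or => /and4P[_ /andP[js1 _] js2 _].
rewrite big_cat big_cons /= mulgA => /(canRL (mulgK _)); rewrite mul1g => E.
by rewrite -(groupMl _ (memK _ js1)) E groupV memK.
Qed.

Lemma gen_imset_neq (gT : finGroupType) (I : finType) (g : I -> gT)
    (G : {set gT}) (K : {group gT}) (x : gT) :
  (forall i, g i \in K) -> x \in G -> x \notin K -> <<[set g i | i : I]>> <> G.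
Proof.
move=> gK xG xK genG; move/negP: xK; apply.
have /subsetP : <<[set g i | i : I]>> \subset K.
  by rewrite gen_subG; apply/subsetP => _ /imsetP[i _ ->].
by rewrite genG; apply.
Qed.

Section Dihedral.

Variables (gT : finGroupType) (N : nat) (z y : gT).
Hypotheses (N_gt0 : (0 < N)%N) (four_dvd_N : (4 %| N)%N).
Hypotheses (zN : z ^+ N = 1) (y2 : y ^+ 2 = 1) (yzy : y * z * y = z^-1).

Local Notation G := <<[set z; y]>>.
Local Notation H := <<[set z ^+ 2; y]>>.

Lemma odd_N : odd N = false.
Proof. by apply/negbTE; lia. Qed.

Lemma odd_N_pred : odd N.-1.
Proof. by lia. Qed.

Lemma invg_y : y^-1 = y.
Proof. by apply/eqP; rewrite eq_invg_mul -expg2 y2. Qed.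

Lemma conj_z_y : z ^ y = z ^+ N.-1.
Proof.
rewrite conjgE invg_y mulgA yzy; apply/eqP; rewrite eq_invg_mul -expgS.
by rewrite prednK // zN.
Qed.

Lemma expy_expz j k : y ^+ j * z ^+ k = z ^+ (k * N.-1 ^ j) * y ^+ j.
Proof.
elim: j => [|j IHj]; first by rewrite mul1g mulg1 muln1.
rewrite expgS -mulgA IHj mulgA [y * _]conjgCV invg_y conjXg conj_z_y -expgM.
by rewrite -mulgA -expgS expnS mulnCA.
Qed.

Definition dih (i j : nat) : gT := z ^+ i * y ^+ j.

Lemma dih_mod i j : dih i j = dih (i %% N) (j %% 2).
Proof. by rewrite /dih expg_mod // expg_mod. Qed.

Lemma mul_dih i j k l : dih i j * dih k l = dih (i + k * N.-1 ^ j) (j + l).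
Proof. by rewrite /dih mulgA -(mulgA _ (y ^+ j)) expy_expz !expgD !mulgA. Qed.

Definition dih_pair (q : 'I_N * 'I_2) : gT := dih q.1 q.2.

(* [(odd i, odd j)] is the image of [z^i y^j] in [G / <z^2>], a Klein
   four-group; [parity_set p] is the preimage of the subset [p] of it. *)
Definition parity_set (p : bool -> bool -> bool) : {set gT} :=
  dih_pair @: [set q : 'I_N * 'I_2 | p (odd q.1) (odd q.2)].

Lemma mem_parity_set (p : bool -> bool -> bool) i j :
  p (odd i) (odd j) -> dih i j \in parity_set p.
Proof.
move=> pij; rewrite dih_mod; apply/imsetP.
exists (Ordinal (ltn_pmod i N_gt0), Ordinal (ltn_pmod j (isT : 0 < 2)%N)) => //.
by rewrite inE /= !odd_mod ?odd_N.
Qed.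

Lemma parity_set_group (p : bool -> bool -> bool) :
    p false false -> (forall a b c d, p a b -> p c d -> p (a (+) c) (b (+) d)) ->
  group_set (parity_set p).
Proof.
move=> p00 pD; apply/group_setP; split.
  by have := @mem_parity_set p 0 0 p00; rewrite /dih !expg0 mulg1.
move=> _ _ /imsetP[[i j] + ->] /imsetP[[k l] + ->]; rewrite !inE /= => pij pkl.
by rewrite mul_dih mem_parity_set // !oddD oddM oddX odd_N_pred orbT andbT pD.
Qed.

Lemma gen_sub_parity_set (p : bool -> bool -> bool) (A : {set gT}) :
    p false false -> (forall a b c d, p a b -> p c d -> p (a (+) c) (b (+) d)) ->
  A \subset parity_set p -> <<A>> \subset parity_set p.
Proof.
move=> p00 pD; have Pgroup := parity_set_group p00 pD.
by rewrite -[parity_set p]/(gval (Group Pgroup)) gen_subG.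
Qed.

Lemma G_sub_parity : G \subset parity_set (fun _ _ => true).
Proof.
apply: gen_sub_parity_set => //; rewrite subUset !sub1set.
have -> : z = dih 1 0 by rewrite /dih mulg1.
have -> : y = dih 0 1 by rewrite /dih mul1g.
by rewrite !mem_parity_set.
Qed.

Lemma H_sub_parity : H \subset parity_set (fun a _ => ~~ a).
Proof.
apply: gen_sub_parity_set => [//|a b c d /negbTE-> /negbTE-> //|].
rewrite subUset !sub1set.
have -> : z ^+ 2 = dih 2 0 by rewrite /dih mulg1.
have -> : y = dih 0 1 by rewrite /dih mul1g.
by rewrite !mem_parity_set.
Qed.

Lemma mem_H i j : ~~ odd i -> dih i j \in H.
Proof.
move=> even_i; rewrite /dih -(odd_double_half i) (negbTE even_i) add0n.
rewrite -mul2n expgM.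
by rewrite groupM // groupX // mem_gen ?set21 ?set22.
Qed.

Hypothesis card_G : #|G| = (N * 2)%N.

Lemma dih_pair_inj : injective dih_pair.
Proof.
have card_dom : #|[set q : 'I_N * 'I_2 | true]| = (N * 2)%N.
  by rewrite cardsT card_prod !card_ord.
have : #|parity_set (fun _ _ => true)| == #|[set q : 'I_N * 'I_2 | true]|.
  rewrite eqn_leq leq_imset_card card_dom -card_G.
  exact: subset_leq_card G_sub_parity.
by move/imset_injP=> inj q q'; apply: inj; rewrite inE.
Qed.

Lemma eq_dih i j k l :
  (dih i j == dih k l) = (i == k %[mod N]) && (j == l %[mod 2]).
Proof.
rewrite [dih i j]dih_mod [dih k l]dih_mod.
apply/eqP/andP => [E | [/eqP-> /eqP->] //].
have lt_N m : (m %% N < N)%N by rewrite ltn_pmod.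
have lt_2 m : (m %% 2 < 2)%N by rewrite ltn_pmod.
have := @dih_pair_inj (Ordinal (lt_N i), Ordinal (lt_2 j))
                      (Ordinal (lt_N k), Ordinal (lt_2 l)) E.
by case=> -> ->.
Qed.

Definition K : {set gT} := parity_set (fun a b => a == b).

Lemma K_group_set : group_set K.
Proof. by apply: parity_set_group => // [] [] [] [] [] //= /eqP-> /eqP->. Qed.

Canonical K_group := Group K_group_set.

Lemma y_notin_K : y \notin K.
Proof.
apply/imsetP=> -[[i j]]; rewrite inE /= => odd_ij /eqP.
rewrite -[y]mul1g -(expg0 z) -[y]expg1 -/(dih 0 1) eq_dih mod0n.
by rewrite !modn_small // => /andP[/eqP i0 /eqP j1]; rewrite -i0 -j1 in odd_ij.
Qed.

Lemma dih_eq1 i j : (dih i j == 1) = (N %| i)%N && (2 %| j)%N.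
Proof. by rewrite -[1](mulg1 1) -{1}(expg0 z) -(expg0 y) eq_dih !mod0n. Qed.

Lemma involution_notin_H_in_K g : g \in G -> g \notin H -> g ^+ 2 = 1 -> g \in K.
Proof.
move=> /(subsetP G_sub_parity) /imsetP[[i j] _ ->]; rewrite /dih_pair /=.
move=> /(contraNT (@mem_H i j)) odd_i g2.
case: j g2 => [[|[|//]] lt_j] /= g2; last by apply: mem_parity_set; rewrite odd_i.
move/eqP: g2; rewrite expg2 mul_dih expn0 muln1 dih_eq1 => /andP[N_dvd _].
by have := dvdn_trans four_dvd_N N_dvd; lia.
Qed.

Lemma H_elt_order_gt2_in_K g : g \in H -> (2 < #[g])%N -> g \in K.
Proof.
move=> /(subsetP H_sub_parity) /imsetP[[i j]]; rewrite inE /dih_pair /=.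
move=> even_i -> ord_g; case: j ord_g => [[|[|//]] lt_j] /= ord_g.
  by apply: mem_parity_set; rewrite (negbTE even_i).
have /order_inf : dih i 1 ^+ 2 == 1.
  by rewrite expg2 mul_dih expn1 dih_eq1 -mulnS prednK // dvdn_mull.
by rewrite leqNgt ord_g.
Qed.

Lemma no_admissible r (m : nat -> nat) (out : nat -> bool) (g : 'I_r -> gT)
    (j : 'I_r) :
    (forall i : 'I_r, i != j -> out i && (m i == 2) || ~~ out i && (2 < m i))%N ->
  ~ admissible G H m out g.
Proof.
move=> branch [gG prod1 _ [genG ord_g outH]].
have gK i : i != j -> g i \in K.
  move=> ij; case/orP: (branch i ij) => /andP[out_i].
    move=> /eqP m2; apply: involution_notin_H_in_K; rewrite ?outH //.
    by rewrite -m2 -ord_g expg_order.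
  move=> m_gt2; apply: H_elt_order_gt2_in_K; last by rewrite ord_g.
  by apply/negPn; rewrite outH.
apply: (gen_imset_neq _ (mem_gen (set22 z y)) y_notin_K genG) => i.
by have [->|/gK//] := eqVneq i j; apply: prod_eq1_mem.
Qed.

End Dihedral.

Theorem lemma5p7 (gT : finGroupType) (d : nat) (z y : gT) :
  (0 < d)%N ->
  z ^+ (2 * (2 * d))%N = 1 ->
  y ^+ 2 = 1 ->
  y * z * y = z^-1 ->
  #|<<[set z; y]>>| = (4 * (2 * d))%N ->
  let G := <<[set z; y]>> in
  let H := <<[set z ^+ 2; y]>> in
  [/\ (forall g : 'I_6 -> gT, ~ admissible G H typeI_m typeI_out g),
      (forall (c5 : nat) (g : 'I_5 -> gT), (2 <= c5)%N ->
         ~ admissible G H (typeII_m c5) typeII_out g),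
      (forall (d4 : nat) (g : 'I_4 -> gT), (1 < d4)%N ->
         ~ admissible G H (typeIIIa_m d4) typeIIIa_out g)
    & (forall (c3 c4 : nat) (g : 'I_4 -> gT), (2 <= c3)%N -> (c3 <= c4)%N -> (2 < c4)%N ->
         ~ admissible G H (typeIIIb_m c3 c4) typeIIIb_out g)].
Proof.
move=> d_gt0 zN y2 yzy card_G G H.
have N_gt0 : (0 < 2 * (2 * d))%N by lia.
have four_dvd_N : (4 %| 2 * (2 * d))%N by rewrite mulnA dvdn_mulr.
have card_G' : #|G| = (2 * (2 * d) * 2)%N by rewrite card_G; lia.
have no_adm := no_admissible N_gt0 four_dvd_N zN y2 yzy card_G'.
split=> [g | c5 g _ | d4 g _ | c3 c4 g _ _ c4_gt2].
- by apply: (no_adm _ _ _ _ ord0) => -[[|[|[|[|[|[|]]]]]]].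
- by apply: (no_adm _ _ _ _ ord_max) => -[[|[|[|[|[|]]]]]].
- by apply: (no_adm _ _ _ _ ord_max) => -[[|[|[|[|]]]]].
- by apply: (no_adm _ _ _ _ (Ordinal (isT : 2 < 4)%N)) => -[[|[|[|[|]]]]].
Qed.
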